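(* Let $X$ be a Banach lattice with order continuous norm, and let $S$ be a convex $C_0$-semigroup on $X$ with generator $A\colon D(A)\subset X\to X$. Let $y\colon[0,\infty)\to X$ be a continuous function such that $y(t)\in D(A)$ for all $t\ge 0$ and $\lim_{h\downarrow 0}\frac{y(t+h)-y(t)}{h}=Ay(t)$ for all $t\ge 0$. Then $y(t)=S(t)x$ for all $t\ge 0$, where $x:=y(0)$.
   Context: A Banach lattice $X$ has order continuous norm if $\|x_\alpha\|\to 0$ for every net $x_\alpha\downarrow 0$. An operator $T\colon X\to X$ is convex if $T(\lambda x+(1-\lambda)y)\le \lambda Tx+(1-\lambda)Ty$ for all $x,y$, $\lambda\in[0,1]$, and bounded if $\sup_{\|x\|\le r}\|Tx\|<\infty$ for all $r>0$. A convex $C_0$-semigroup is a family $(S(t))_{t\ge0}$ of bounded convex operators $X\to X$ with $S(0)=\mathrm{id}$, $S(t+s)=S(t)S(s)$ for all $s,t\ge0$, and $S(t)x\to x$ as $t\downarrow 0$ for all $x$. Its generator is $Ax:=\lim_{h\downarrow 0}\frac{S(h)x-x}{h}$ with domain $D(A)$ the set of $x$ for which this norm limit exists. *)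

From HB Require Import structures.
From mathcomp Require Import all_boot all_order all_algebra.
From mathcomp Require Import all_classical all_reals all_analysis.
Set Implicit Arguments. Unset Strict Implicit. Unset Printing Implicit Defensive.
Import Order.TTheory GRing.Theory Num.Theory.
Import numFieldNormedType.Exports.
Local Open Scope classical_set_scope.
Local Open Scope ring_scope.

Section BanachLattice.
Context {R : realType} {V : completeNormedModType R}.

Definition is_sup2 (le : V -> V -> Prop) (s x y : V) : Prop :=
  le x s /\ le y s /\ (forall u, le x u -> le y u -> le s u).

Definition vector_lattice (le : V -> V -> Prop) : Prop :=
  (forall x, le x x) /\
  (forall x y, le x y -> le y x -> x = y) /\
  (forall x y z, le x y -> le y z -> le x z) /\
  (forall x y z, le x y -> le (x + z) (y + z)) /\
  (forall (a : R) x, 0 <= a -> le 0 x -> le 0 (a *: x)) /\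
  (forall x y, exists s, is_sup2 le s x y).

Definition banach_lattice (le : V -> V -> Prop) : Prop :=
  vector_lattice le /\
  (forall x y ax ay, is_sup2 le ax x (- x) -> is_sup2 le ay y (- y) ->
     le ax ay -> `|x| <= `|y|).

(* Order continuous norm: ||x_a|| -> 0 for every net x_a decreasing to 0
   (i.e. decreasing with infimum 0), indexed by a nonempty directed set. *)
Definition order_continuous_norm (le : V -> V -> Prop) : Prop :=
  forall (I : Type) (leI : I -> I -> Prop) (x : I -> V),
    (exists i : I, True) ->
    (forall i, leI i i) ->
    (forall i j k, leI i j -> leI j k -> leI i k) ->
    (forall i j, exists k, leI i k /\ leI j k) ->
    (forall i j, leI i j -> le (x j) (x i)) ->
    (forall i, le 0 (x i)) ->
    (forall u, (forall i, le u (x i)) -> le u 0) ->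
    forall eps : R, 0 < eps -> exists i0, forall i, leI i0 i -> `|x i| < eps.

Definition convex_op (le : V -> V -> Prop) (T : V -> V) : Prop :=
  forall (x y : V) (l : R), 0 <= l <= 1 ->
    le (T (l *: x + (1 - l) *: y)) (l *: T x + (1 - l) *: T y).

Definition bounded_op (T : V -> V) : Prop :=
  forall r : R, 0 < r -> exists M : R, forall x : V, `|x| <= r -> `|T x| <= M.

(* Convex C0-semigroup; S t is only relevant for t >= 0. *)
Definition convex_C0_semigroup (le : V -> V -> Prop) (S : R -> V -> V) : Prop :=
  [/\ (forall t, 0 <= t -> convex_op le (S t) /\ bounded_op (S t)),
      (forall x, S 0 x = x),
      (forall s t x, 0 <= s -> 0 <= t -> S (t + s) x = S t (S s x)) &
      (forall x, (fun t => S t x) @ 0^'+ --> x)].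

(* a = A x where A is the generator of S, i.e. x \in D(A) with
   (S h x - x)/h -> a as h decreases to 0. *)
Definition generator_at (S : R -> V -> V) (x a : V) : Prop :=
  (fun h : R => h^-1 *: (S h x - x)) @ 0^'+ --> a.

End BanachLattice.

From HB Require Import structures.
From mathcomp Require Import all_boot all_order all_algebra.
From mathcomp Require Import all_classical all_reals all_analysis.
From mathcomp Require Import ring lra.
Import Order.TTheory GRing.Theory Num.Theory.
Import numFieldNormedType.Exports.
Local Open Scope classical_set_scope.
Local Open Scope ring_scope.

(* The function [s |-> S (t - s) (y s)] has vanishing right derivative on
   [[0, t)] and is left continuous on [(0, t]], hence is constant on [[0, t]];
   its values at [t] and [0] are [y t] and [S t (y 0)].
   Both properties rest on estimates for [S τ] that are uniform for [τ] in a
   short time interval and arguments near a given point.  In a Banach lattice a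
   convex operator bounded on a ball is Lipschitz on a smaller ball: [T z - T x]
   is squeezed between two secant slopes, and the lattice norm turns this order
   sandwich into a norm bound.  Boundedness of [S τ] near a point, uniformly for
   small [τ], follows from strong continuity by Baire's theorem applied to the
   sets where [S τ (p + x)] or [S τ (p - x)] is large. *)

Section VectorLattice.
Context {R : realType} {V : completeNormedModType R} {le : V -> V -> Prop}.
Hypothesis hv : vector_lattice le.

Lemma vl_refl x : le x x.
Proof. by case: hv. Qed.

Lemma vl_trans {x y z} : le x y -> le y z -> le x z.
Proof. by case: hv => _ [_ [H _]]; apply: H. Qed.

Lemma vl_addr z {x y} : le x y -> le (x + z) (y + z).
Proof. by case: hv => _ [_ [_ [H _]]]; apply: H. Qed.

Lemma vl_scale_ge0 (a : R) {x} : 0 <= a -> le 0 x -> le 0 (a *: x).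
Proof. by case: hv => _ [_ [_ [_ [H _]]]]; apply: H. Qed.

Lemma vl_sup2 x y : exists s, is_sup2 le s x y.
Proof. by case: hv => _ [_ [_ [_ [_ H]]]]; apply: H. Qed.

Lemma vl_subr_ge0 x y : le x y <-> le 0 (y - x).
Proof.
split=> [/(vl_addr (- x))|/(vl_addr x)]; first by rewrite subrr.
by rewrite add0r subrK.
Qed.

Lemma vl_add {x y x' y'} : le x y -> le x' y' -> le (x + x') (y + y').
Proof.
move=> /(vl_addr x') H1 /(vl_addr y) H2.
by apply: vl_trans H1 _; rewrite [y + x']addrC [y + y']addrC.
Qed.

Lemma vl_scale (a : R) {x y} : 0 <= a -> le x y -> le (a *: x) (a *: y).
Proof.
by move=> a0 /vl_subr_ge0 H; apply/vl_subr_ge0; rewrite -scalerBr; exact: vl_scale_ge0.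
Qed.

Lemma vl_opp {x y} : le x y -> le (- y) (- x).
Proof. by move=> /vl_subr_ge0 H; apply/vl_subr_ge0; rewrite opprK addrC. Qed.

Lemma abs_ge0 {s x} : is_sup2 le s x (- x) -> le 0 s.
Proof.
move=> [/vl_subr_ge0 H1 [/vl_subr_ge0 H2 _]]; rewrite opprK in H2.
have -> : s = 2^-1 *: ((s - x) + (s + x)).
  rewrite addrACA addNr addr0 -mulr2n -(scaler_nat 2 s) scalerA.
  by rewrite mulVf ?pnatr_eq0 ?scale1r.
by apply: vl_scale_ge0; rewrite // -[0]addr0; apply: vl_add.
Qed.

Lemma abs_id {s} : le 0 s -> is_sup2 le s s (- s).
Proof.
move=> s0; split; first exact: vl_refl.
split=> [|u su _ //].
by apply: (vl_trans _ s0); rewrite -oppr0; apply: vl_opp.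
Qed.

End VectorLattice.

Section BanachLattice.
Context {R : realType} {V : completeNormedModType R} {le : V -> V -> Prop}.
Hypothesis hb : banach_lattice le.

Let hv : vector_lattice le := hb.1.

Lemma normr_abs s x : is_sup2 le s x (- x) -> `|s| <= `|x|.
Proof.
move=> Hs; have s0 := abs_ge0 hv Hs.
exact: hb.2 _ _ _ _ (abs_id hv s0) Hs (vl_refl hv s).
Qed.

(* [a <= u <= b] gives [u <= |b|] and [-u <= |a|], hence [|u| <= |a| + |b|] in
   the lattice, and the lattice norm is monotone in [|.|]. *)
Lemma normr_sandwich {a u b} : le a u -> le u b -> `|u| <= `|a| + `|b|.
Proof.
move=> au ub.
have [sa Ha] := vl_sup2 hv a (- a); have [sb Hb] := vl_sup2 hv b (- b).
have [su Hu] := vl_sup2 hv u (- u).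
have sab0 : le 0 (sa + sb).
  by have := vl_add hv (abs_ge0 hv Ha) (abs_ge0 hv Hb); rewrite addr0.
have su_le : le su (sa + sb).
  apply: Hu.2.2.
  - apply: (vl_trans hv ub); apply: (vl_trans hv Hb.1).
    by rewrite -{1}[sb]add0r; exact: (vl_addr hv _ (abs_ge0 hv Ha)).
  - apply: (vl_trans hv (vl_opp hv au)); apply: (vl_trans hv Ha.2.1).
    by rewrite -{1}[sa]addr0; exact: (vl_add hv (vl_refl hv sa) (abs_ge0 hv Hb)).
apply: le_trans (hb.2 _ _ _ _ Hu (abs_id hv sab0) su_le) _.
by apply: le_trans (ler_normD _ _) _; apply: lerD; apply: normr_abs.
Qed.

End BanachLattice.

Section ConvexOperator.
Context {R : realType} {V : completeNormedModType R} {le : V -> V -> Prop}.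
Hypothesis hb : banach_lattice le.
Let hv : vector_lattice le := hb.1.
Variable T : V -> V.
Hypothesis hc : convex_op le T.

Lemma scale_line (x d : V) (m a b : R) :
  m *: (x + a *: d) + (1 - m) *: (x + b *: d) = x + (m * a + (1 - m) * b) *: d.
Proof. by rewrite !scalerDr !scalerA addrACA -scalerDl subrKC scale1r scalerDl. Qed.

Lemma convex_slope_le (x d : V) (k : R) : 1 <= k ->
  le (T (x + d) - T x) (k^-1 *: (T (x + k *: d) - T x)).
Proof.
move=> k1; have k0 : 0 < k by lra.
have l01 : 0 <= k^-1 <= 1 by rewrite invr_ge0 ltW //= invr_le1 ?unitf_gt0.
have := vl_addr hv (- T x) (hc (x + k *: d) (x + 0 *: d) _ l01).
rewrite scale_line scale0r addr0 mulr0 addr0 mulVf ?gt_eqF // scale1r.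
by rewrite scalerBl scale1r addrCA [T x + _]addrC addrK scalerBr.
Qed.

Lemma convex_slope_ge (x d : V) (k : R) : 0 < k ->
  le (k^-1 *: (T x - T (x - k *: d))) (T (x + d) - T x).
Proof.
move=> k0; set m := k / (k + 1).
(* [x] is the convex combination [m (x + d) + (1 - m) (x - k d)]. *)
have m01 : 0 <= m <= 1.
  by rewrite /m divr_ge0 ?ler_pdivrMr; lra.
have := hc (x + 1 *: d) (x + (- k) *: d) _ m01.
rewrite scale_line.
have -> : m * 1 + (1 - m) * - k = 0 by rewrite /m; field; lra.
rewrite scale0r addr0 scale1r => /(vl_subr_ge0 hv) H; apply/(vl_subr_ge0 hv).
have c0 : 0 <= 1 + k^-1 by rewrite addr_ge0 ?invr_ge0 ?ltW.
have cm : (1 + k^-1) * m = 1 by rewrite /m; field; lra.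
have cm' : (1 + k^-1) * (1 - m) = k^-1 by rewrite /m; field; lra.
have := vl_scale_ge0 hv _ c0 H.
rewrite scalerBr scalerDr !scalerA cm cm' scale1r scalerDl scale1r scaleNr.
by rewrite opprD addrACA scalerBr opprB.
Qed.

Lemma convex_lipschitz_ball (p : V) (r M : R) : 0 < r ->
  (forall c, `|c - p| <= r -> `|T c| <= M) ->
  forall x z, `|x - p| <= r / 4 -> `|z - p| <= r / 4 ->
  `|T z - T x| <= 8 * M / r * `|z - x|.
Proof.
move=> r0 hM x z hx hz.
have [->|zx] := eqVneq z x; first by rewrite !subrr normr0 mulr0.
have xz : x + (z - x) = z by rewrite addrC subrK.
set d := z - x in xz *.
have d0 : 0 < `|d| by rewrite normr_gt0 subr_eq0.
have dr : `|d| <= r / 2.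
  rewrite (_ : d = (z - p) - (x - p)); last by rewrite opprB addrA subrK.
  by apply: le_trans (ler_normB _ _) _; lra.
(* [k] is chosen so that [x + k d] and [x - k d] stay in the [r]-ball around [p]. *)
set k := r / (2 * `|d|).
have k1 : 1 <= k by rewrite ler_pdivlMr ?mul1r; lra.
have k0 : 0 < k by lra.
have kd : k * `|d| = r / 2 by rewrite /k; field; rewrite gt_eqF.
have hline e : `|e| <= k -> `|T (x + e *: d)| <= M.
  move=> ek; apply: hM; rewrite addrAC; apply: le_trans (ler_normD _ _) _.
  rewrite normrZ; have : `|e| * `|d| <= k * `|d| by rewrite ler_pM2r.
  lra.
have Tx : `|T x| <= M by rewrite -[x]addr0 -(scale0r d) hline ?normr0 //; lra.
have Tw : `|T (x + k *: d)| <= M by rewrite hline // ger0_norm //; lra.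
have Tw' : `|T (x - k *: d)| <= M by rewrite -scaleNr hline // normrN ger0_norm //; lra.
have := normr_sandwich hb (convex_slope_ge x d _ k0) (convex_slope_le x d _ k1).
rewrite xz => /le_trans; apply.
rewrite !normrZ ger0_norm ?invr_ge0; last lra.
have : `|T x - T (x - k *: d)| + `|T (x + k *: d) - T x| <= 4 * M.
  by apply: le_trans (lerD (ler_normB _ _) (ler_normB _ _)) _; lra.
have ki0 : 0 <= k^-1 by rewrite invr_ge0 ltW.
rewrite -mulrDr => /(ler_wpM2l ki0) /le_trans; apply.
suff -> : k^-1 * (4 * M) = 8 * M / r * `|d| by [].
by rewrite /k invf_div; field; rewrite gt_eqF.
Qed.

Lemma convex_lipschitz_bounded : bounded_op T -> forall rho : R, 0 < rho ->
  exists2 L : R, 0 <= L & forall x z, `|x| <= rho -> `|z| <= rho ->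
    `|T z - T x| <= L * `|z - x|.
Proof.
move=> hT rho rho0; have r0 : 0 < 4 * rho by lra.
have [M hM] := hT _ r0.
have M0 : 0 <= M by apply: le_trans (normr_ge0 _) (hM 0 _); rewrite normr0 ltW.
exists (8 * M / (4 * rho)); first by rewrite divr_ge0 ?mulr_ge0 // ltW.
move=> x z hx hz; apply: (convex_lipschitz_ball 0 _ _ r0).
- by move=> c; rewrite subr0; apply: hM.
- by rewrite subr0 mulrAC divff ?mul1r // gt_eqF.
- by rewrite subr0 mulrAC divff ?mul1r // gt_eqF.
Qed.

Lemma convex_continuous : bounded_op T -> continuous T.
Proof.
move=> hT x; have x1 : 0 < `|x| + 1 by rewrite ltr_pwDr.
have [L L0 HL] := convex_lipschitz_bounded hT _ x1.
apply/cvgrPdist_le => e e0; have L1 : 0 < L + 1 by lra.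
near=> z.
have zx : `|x - z| < Num.min 1 (e / (L + 1)).
  by near: z; apply: cvgr_dist_lt; rewrite // lt_min ltr01 divr_gt0.
move: zx; rewrite lt_min => /andP[z1 ze].
have hz : `|z| <= `|x| + 1.
  by rewrite -[z](subrKC x); apply: le_trans (ler_normD _ _) _; rewrite distrC; lra.
have hx : `|x| <= `|x| + 1 by lra.
apply: le_trans (HL _ _ hz hx) _; apply: le_trans (ler_wpM2l L0 (ltW ze)) _.
by rewrite mulrCA ger_pMr // ler_pdivrMr // mul1r; lra.
Unshelve. all: by end_near.
Qed.

Lemma convex_midpoint (u v c : V) : u + v = 2 *: c ->
  le (T c) (2^-1 *: (T u + T v)).
Proof.
move=> uvc; have h01 : 0 <= (2^-1 : R) <= 1 by apply/andP; split; lra.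
have := hc u v _ h01; rewrite (_ : 1 - 2^-1 = 2^-1 :> R); last by field.
by rewrite -!scalerDr uvc scalerA mulVf ?pnatr_eq0 // scale1r.
Qed.

Lemma convex_bound_near (p x0 : V) (r K : R) :
  (forall y, `|y - x0| < r -> `|T (p + y)| <= K /\ `|T (p - y)| <= K) ->
  forall c, `|c - p| < r / 2 -> `|T c| <= 2 * `|T p| + 2 * K.
Proof.
move=> HK c hcp.
have upper w : `|w| < r / 2 -> exists2 U, le (T (p + w)) U & `|U| <= K.
  move=> hw; exists (2^-1 *: (T (p + (x0 + 2 *: w)) + T (p - x0))).
    apply: convex_midpoint.
    by rewrite addrACA [x0 + _]addrC addrK scalerDr -mulr2n -scaler_nat.
  have /HK[K1 _] : `|(x0 + 2 *: w) - x0| < r.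
    by rewrite addrC addKr normrZ ger0_norm; lra.
  have /HK[_ K2] : `|x0 - x0| < r by rewrite subrr normr0; have := normr_ge0 w; lra.
  rewrite normrZ ger0_norm; last lra.
  by have := ler_normD (T (p + (x0 + 2 *: w))) (T (p - x0)); lra.
have [U HU NU] := upper (c - p) hcp; rewrite subrKC in HU.
have [U' HU' NU'] := upper (p - c) ltac:(by rewrite distrC).
have lo : le (2 *: T p - U') (T c).
  have e : c + (p + (p - c)) = 2 *: p by rewrite addrCA subrKC -mulr2n -scaler_nat.
  have := vl_scale hv 2 (ler0n _ 2) (convex_midpoint _ _ _ e).
  rewrite scalerA mulfV ?pnatr_eq0 // scale1r => /(vl_trans hv) mid.
  have := vl_addr hv (- U') (mid _ (vl_add hv (vl_refl hv (T c)) HU')).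
  by rewrite addrK.
apply: le_trans (normr_sandwich hb lo HU) _.
have := ler_normB (2 *: T p) U'; rewrite normrZ ger0_norm //; lra.
Qed.

End ConvexOperator.

Section RealLine.
Context {R : realType}.

Lemma near_at_right0_itv {P : R -> Prop} :
  (\forall h \near 0^'+, P h) -> exists2 d : R, 0 < d & forall h, 0 < h < d -> P h.
Proof.
move=> /nbhs_ballP[d d0 Hd]; exists d => // h /andP[h0 hd]; apply: Hd => //.
by rewrite /ball /= sub0r normrN gtr0_norm.
Qed.

Lemma real_induction (P : R -> Prop) (t : R) : 0 <= t -> P 0 ->
  (forall s, 0 < s <= t -> (forall u, 0 <= u < s -> P u) -> P s) ->
  (forall s, 0 <= s < t -> (forall u, 0 <= u <= s -> P u) ->
     \forall h \near 0^'+, P (s + h)) ->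
  P t.
Proof.
move=> t0 P0 Pleft Pright.
pose A := [set s | s <= t /\ forall u, 0 <= u <= s -> P u].
have A0 : A 0.
  by split=> // u /andP[u0 u0']; have -> : u = 0 by apply/eqP; rewrite eq_le u0'.
have hA : has_sup A by split; [exists 0 | exists t => s []].
set m := sup A.
have m0 : 0 <= m by apply: sup_upper_bound.
have mt : m <= t by apply: ge_sup => //; [exists 0 | move=> s []].
have Pbelow u : 0 <= u < m -> P u.
  case/andP=> u0 um; have um' : 0 < m - u by rewrite subr_gt0.
  have [a [_ Pa] ua] := sup_adherent um' hA.
  by apply: Pa; rewrite u0 /= ltW // -[u](subKr m).
have Am : A m.
  split=> // u /andP[u0]; rewrite le_eqVlt => /orP[/eqP->|um]; last exact/Pbelow/andP.
  have [->|m_neq0] := eqVneq m 0; first exact: P0.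
  by apply: Pleft => [|v]; [rewrite lt_neqAle eq_sym m_neq0 m0 | apply: Pbelow].
have [mt'|] := ltP m t; last by move=> tm; apply: Am.2; rewrite t0 (le_trans tm).
have [d d0 Pd] := near_at_right0_itv (Pright m (introT andP (conj m0 mt')) Am.2).
near (0 : R)^'+ => h.
have h0 : 0 < h by near: h; exact: nbhs_right_gt.
have hd : h < d by near: h; exact: nbhs_right_lt.
have hmt : h <= t - m by near: h; apply: nbhs_right_le; rewrite subr_gt0.
suff : A (m + h) by move/(sup_upper_bound hA); rewrite -/m; lra.
split=> [|u /andP[u0 umh]]; first lra.
have [um|mu] := leP u m; first exact: Am.2 (introT andP (conj u0 um)).
by rewrite -(subrKC m u); apply: Pd; rewrite subr_gt0 mu /=; lra.
Unshelve. all: by end_near.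
Qed.

Lemma eq_right_deriv0 {V : normedModType R} (phi : R -> V) (t : R) : 0 <= t ->
  (forall s, 0 <= s < t -> h^-1 *: (phi (s + h) - phi s) @[h --> 0^'+] --> 0) ->
  (forall s, 0 < s <= t -> phi (s - h) @[h --> 0^'+] --> phi s) ->
  phi t = phi 0.
Proof.
move=> t0 dphi cphi.
suff phi_lin e : 0 < e -> `|phi t - phi 0| <= e * t.
  apply/eqP; rewrite -subr_eq0 -normr_le0; apply/ler_addgt0Pr => e e0.
  have t1 : 0 < t + 1 by lra.
  apply: le_trans (phi_lin _ (divr_gt0 e0 t1)) _.
  by rewrite add0r mulrAC ler_pdivrMr // ler_pM2l //; lra.
move=> e0; apply: (@real_induction (fun s => `|phi s - phi 0| <= e * s)) => //.
- by rewrite subrr normr0 mulr0.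
- move=> s s0t Pbelow; have cs := cphi s s0t; case/andP: s0t => s0 st.
  apply/ler_addgt0Pr => eta eta0.
  near (0 : R)^'+ => h.
  have h0 : 0 < h by near: h; exact: nbhs_right_gt.
  have hs : h < s by near: h; exact: nbhs_right_lt.
  have Ph : `|phi (s - h) - phi 0| <= e * (s - h) by apply: Pbelow; lra.
  have ch : `|phi s - phi (s - h)| <= eta.
    by near: h; move/cvgrPdist_le : cs; apply.
  have := ler_normD (phi s - phi (s - h)) (phi (s - h) - phi 0).
  have : e * (s - h) <= e * s by rewrite ler_pM2l //; lra.
  by rewrite addrA subrK; lra.
- move=> s s0t Pupto; have ds := dphi s s0t; case/andP: s0t => s0 st.
  have Ps := Pupto s (introT andP (conj s0 (lexx s))).
  near=> h.
  have h0 : 0 < h by near: h; exact: nbhs_right_gt.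
  have dh : `|h^-1 *: (phi (s + h) - phi s)| <= e.
    by near: h; move/cvgr0Pnorm_le : ds; apply.
  move: dh; rewrite normrZ gtr0_norm ?invr_gt0 // ler_pdivrMl // => dh.
  have := ler_normD (phi (s + h) - phi s) (phi s - phi 0).
  by rewrite addrA subrK mulrDr; lra.
Unshelve. all: by end_near.
Qed.

Lemma cvg_quotientB {V : normedModType R} {f g : R -> V} {p a : V} :
  h^-1 *: (f h - p) @[h --> 0^'+] --> a -> h^-1 *: (g h - p) @[h --> 0^'+] --> a ->
  h^-1 *: (f h - g h) @[h --> 0^'+] --> 0.
Proof.
move=> fa ga; rewrite -(subrr a).
suff -> : (fun h => h^-1 *: (f h - g h)) =
    (fun h => h^-1 *: (f h - p) - h^-1 *: (g h - p)) by exact: cvgB.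
by apply/funext => h; rewrite -scalerBr opprB addrA subrK.
Qed.

Lemma cvg_of_quotient {V : normedModType R} {f : R -> V} {p a : V} :
  h^-1 *: (f h - p) @[h --> 0^'+] --> a -> f h @[h --> 0^'+] --> p.
Proof.
move=> fa; have : p + h *: (h^-1 *: (f h - p)) @[h --> 0^'+] --> p + 0 *: a.
  by apply: cvgD; [exact: cvg_cst | apply: cvgZ => //; exact: cvg_at_right_filter].
rewrite scale0r addr0 => /(cvg_trans _); apply; apply: near_eq_cvg; near=> h.
have h0 : h != 0 by apply: lt0r_neq0; near: h; exact: nbhs_right_gt.
by rewrite scalerA mulfV ?scale1r ?subrKC.
Unshelve. all: by end_near.
Qed.

Lemma cvg_sub_at_right0 {T : topologicalType} (f : R -> T) (s : R) :
  f x @[x --> s] --> f s -> f (s - h) @[h --> 0^'+] --> f s.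
Proof.
move=> fs; apply: cvg_comp fs.
have : s - x @[x --> 0^'+] --> s - 0.
  by apply: cvgB; [exact: cvg_cst | exact: cvg_at_right_filter].
by rewrite subr0.
Qed.

Lemma exists_large_nat (A d : R) : 0 < d ->
  exists2 n : nat, A < n%:R & n.+1%:R^-1 < d.
Proof.
move=> d0; have dV0 : 0 < d^-1 by rewrite invr_gt0.
have NA := truncnS_gt (`|A| + d^-1); have := ler_norm A; have := normr_ge0 A.
exists (Num.truncn (`|A| + d^-1)).+1; first lra.
by rewrite -[X in _ < X]invrK ltf_pV2 ?posrE // -natr1; lra.
Qed.

End RealLine.

Lemma open_norm_gt {R : realType} {U V : normedModType R} (f : U -> V) (c : R) :
  continuous f -> open [set x | c < `|f x|].
Proof.
move=> fc; apply: (@open_comp _ _ (Num.norm \o f) [set y | c < y]); last exact: open_gt.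
by move=> x _; apply: continuous_comp; [exact: fc | exact: norm_continuous].
Qed.

Section ConvexSemigroup.
Context {R : realType} {V : completeNormedModType R} {le : V -> V -> Prop}.
Context {S : R -> V -> V}.
Hypothesis hb : banach_lattice le.
Hypothesis hS : convex_C0_semigroup le S.

Let S_convex τ : 0 <= τ -> convex_op le (S τ).
Proof. by case: hS => H _ _ _ /H[]. Qed.

Let S_bounded τ : 0 <= τ -> bounded_op (S τ).
Proof. by case: hS => H _ _ _ /H[]. Qed.

Let S0 x : S 0 x = x.
Proof. by case: hS. Qed.

Let SD s t x : 0 <= s -> 0 <= t -> S (t + s) x = S t (S s x).
Proof. by case: hS => _ _ H _; apply: H. Qed.

Let S_cvg0 x : S h x @[h --> 0^'+] --> x.
Proof. by case: hS. Qed.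

Lemma sg_bounded_small_time q :
  exists2 d : R, 0 < d & forall τ, 0 <= τ <= d -> `|S τ q| <= `|q| + 1.
Proof.
move/cvgrPdist_lt : (S_cvg0 q) => /(_ 1 ltr01) /near_at_right0_itv[d d0 Hd].
exists (d / 2) => [|τ /andP[τ0 τd]]; first lra.
have [->|τ_neq0] := eqVneq τ 0; first by rewrite S0 lerDl.
have /Hd : 0 < τ < d by rewrite lt_neqAle eq_sym τ_neq0 τ0; lra.
by rewrite distrC; have := ler_normD q (S τ q - q); rewrite subrKC; lra.
Qed.

Let blowup p (n : nat) := \bigcup_(τ in [set τ | 0 <= τ <= n.+1%:R^-1])
  ([set x | n%:R < `|S τ (p + x)|] `|` [set x | n%:R < `|S τ (p - x)|]).

Let blowup_open p n : open (blowup p n).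
Proof.
apply: bigcup_open => τ /andP[τ0 _].
have Sc := convex_continuous hb _ (S_convex _ τ0) (S_bounded _ τ0).
apply: openU; apply: open_norm_gt => x.
- apply: (@continuous_comp _ _ _ (fun y => p + y) (S τ)); last exact: Sc.
  by apply: cvgD; [exact: cvg_cst | exact: cvg_id].
- apply: (@continuous_comp _ _ _ (fun y => p - y) (S τ)); last exact: Sc.
  by apply: cvgB; [exact: cvg_cst | exact: cvg_id].
Qed.

(* Otherwise Baire's theorem yields a point [x] in every [blowup p n], i.e. times
   [τ_n -> 0] along which [S τ_n (p + x)] or [S τ_n (p - x)] is unbounded,
   contradicting strong continuity. *)
Let blowup_not_dense p : exists n, ~ dense (blowup p n).
Proof.
apply/existsNP => blowup_dense.
have /(_ setT) [] := Baire (fun n => conj (blowup_open p n) (blowup_dense n)).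
- by exists 0.
- exact: openT.
move=> x [_ Fx].
have [da da0 Hda] := sg_bounded_small_time (p + x).
have [db db0 Hdb] := sg_bounded_small_time (p - x).
have d0 : 0 < Num.min da db by rewrite lt_min da0.
have [n nA nd] := exists_large_nat (`|p + x| + `|p - x| + 2) _ d0.
have [τ /andP[τ0 τn] Fτ] := Fx n Logic.I.
have [τa τb] : τ <= da /\ τ <= db.
  by split; apply: le_trans τn (le_trans (ltW nd) _); rewrite ge_min lexx ?orbT.
have := Hda τ (introT andP (conj τ0 τa)); have := Hdb τ (introT andP (conj τ0 τb)).
have := normr_ge0 (p + x); have := normr_ge0 (p - x).
by case: Fτ => /= H; lra.
Qed.

Lemma sg_bounded_on_ball p : exists (n : nat) (x0 : V), exists2 r : R, 0 < r &
  forall τ, 0 <= τ <= n.+1%:R^-1 -> forall y, `|y - x0| < r ->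
    `|S τ (p + y)| <= n%:R /\ `|S τ (p - y)| <= n%:R.
Proof.
have [n /denseNE[U [[x0 x0U] UF]]] := blowup_not_dense p.
have /open_nbhs_nbhs/nbhs_ballP[r r0 rU] := x0U.
exists n, x0, r => // τ τn y yx0.
have Uy : U y by apply: rU; rewrite -ball_normE /ball_ /= distrC.
by split; rewrite leNgt; apply/negP => H; rewrite -[False]/(set0 y) -UF;
  split=> //; exists τ; rewrite // /=; [left | right].
Qed.

Lemma sg_locally_bounded p : exists (d r M : R), [/\ 0 < d, 0 < r &
  forall τ, 0 <= τ <= d -> forall c, `|c - p| <= r -> `|S τ c| <= M].
Proof.
have [n [x0 [r r0 Hn]]] := sg_bounded_on_ball p.
have [dp dp0 Hdp] := sg_bounded_small_time p.
exists (Num.min n.+1%:R^-1 dp), (r / 4), (2 * (`|p| + 1) + 2 * n%:R).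
split=> [||τ /andP[τ0 τd] c cp]; first by rewrite lt_min dp0 invr_gt0 ltr0Sn.
  by rewrite divr_gt0.
have [τn τdp] : τ <= n.+1%:R^-1 /\ τ <= dp.
  by split; apply: le_trans τd _; rewrite ge_min lexx ?orbT.
have cp' : `|c - p| < r / 2 by lra.
have /(convex_bound_near hb _ (S_convex _ τ0)) /(_ c cp') :=
  Hn τ (introT andP (conj τ0 τn)).
by have := Hdp τ (introT andP (conj τ0 τdp)); lra.
Qed.

Lemma sg_locally_lipschitz p : exists (d r L M : R), [/\ 0 < d, 0 < r, 0 <= L &
  forall τ, 0 <= τ <= d ->
    (forall c, `|c - p| <= r -> `|S τ c| <= M) /\
    (forall x z, `|x - p| <= r -> `|z - p| <= r -> `|S τ z - S τ x| <= L * `|z - x|)].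
Proof.
have [d [r [M [d0 r0 HM]]]] := sg_locally_bounded p.
have M0 : 0 <= M.
  apply: le_trans (normr_ge0 _) (HM 0 _ p _); first by rewrite lexx ltW.
  by rewrite subrr normr0 ltW.
exists d, (r / 4), (8 * M / r), M; split=> //; first by rewrite divr_gt0.
  by rewrite divr_ge0 ?mulr_ge0 // ltW.
move=> τ hτ; have τ0 : 0 <= τ by case/andP: hτ.
split=> [c cp|]; first by apply: HM => //; lra.
exact: (convex_lipschitz_ball hb _ (S_convex _ τ0) p r M r0 (HM τ hτ)).
Qed.

Lemma sg_lipschitz_near_time p : exists2 d : R, 0 < d & exists2 r : R, 0 < r &
  forall τ0, 0 <= τ0 -> exists2 L : R, 0 <= L & forall τ, τ0 <= τ <= τ0 + d ->
    forall x z, `|x - p| <= r -> `|z - p| <= r -> `|S τ z - S τ x| <= L * `|z - x|.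
Proof.
have [d [r [L1 [M [d0 r0 L10 HL]]]]] := sg_locally_lipschitz p.
exists d => //; exists r => // τ0 τ00.
have M1 : 0 < `|M| + 1 by rewrite ltr_pwDr.
have [L2 L20 HL2] :=
  convex_lipschitz_bounded hb _ (S_convex _ τ00) (S_bounded _ τ00) _ M1.
exists (L2 * L1) => [|τ /andP[τ0τ ττ0] x z xp zp]; first exact: mulr_ge0.
have /HL[HB HLσ] : 0 <= τ - τ0 <= d by apply/andP; split; lra.
have bM c : `|c - p| <= r -> `|S (τ - τ0) c| <= `|M| + 1.
  by move=> /HB cM; have := ler_norm M; lra.
rewrite -(subrKC τ0 τ) !(SD (τ - τ0) τ0) ?subr_ge0 //.
apply: le_trans (HL2 _ _ (bM x xp) (bM z zp)) _.
by rewrite -mulrA ler_wpM2l // HLσ.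
Qed.

Lemma sg_cvg_at_right0 {x : R -> V} {p : V} :
  x h @[h --> 0^'+] --> p -> S h (x h) @[h --> 0^'+] --> p.
Proof.
move=> xp; have [d [r [L [M [d0 r0 L0 HL]]]]] := sg_locally_lipschitz p.
apply/cvgrPdist_le => e e0; set q := e / (2 * (L + 1)).
have q0 : 0 < q by rewrite divr_gt0 // mulr_gt0 //; lra.
have Lq1 : (L + 1) * q = e / 2 by rewrite /q; field; lra.
have Lq : L * q <= e / 2 by rewrite -Lq1 ler_wpM2r ?ltW //; lra.
near=> h.
have /HL[_ Lip] : 0 <= h <= d.
  by apply/andP; split; near: h; [exact: nbhs_right_ge | exact: nbhs_right_le].
have xh : `|p - x h| <= Num.min r q.
  by near: h; move/cvgrPdist_le : xp; apply; rewrite lt_min r0.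
have Sh : `|p - S h p| <= e / 2.
  by near: h; move/cvgrPdist_le : (S_cvg0 p); apply; lra.
move: xh; rewrite le_min distrC => /andP[xr xq].
have := Lip p (x h); rewrite subrr normr0 => /(_ (ltW r0) xr) Lx.
have := ler_normD (p - S h p) (S h p - S h (x h)).
rewrite addrA subrK [`|S h p - _|]distrC.
have := ler_wpM2l L0 xq; lra.
Unshelve. all: by end_near.
Qed.

Lemma sg_orbit_right_deriv0 {y : R -> V} {t s : R} {a : V} : 0 <= s < t ->
  generator_at S (y s) a -> h^-1 *: (y (s + h) - y s) @[h --> 0^'+] --> a ->
  h^-1 *: (S (t - (s + h)) (y (s + h)) - S (t - s) (y s)) @[h --> 0^'+] --> 0.
Proof.
move=> /andP[s0 st] ga da; set p := y s.
have [d d0 [r r0 HL]] := sg_lipschitz_near_time p.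
set d' := Num.min d (t - s); have d'0 : 0 < d' by rewrite lt_min d0 subr_gt0.
have [d'd d'ts] : d' <= d /\ d' <= t - s by split; rewrite ge_min lexx ?orbT.
have [L L0 Lip] := HL (t - s - d') ltac:(lra).
have yp := cvg_of_quotient da; have Sp := cvg_of_quotient ga.
have dq := cvg_quotientB da ga.
apply/cvgr0Pnorm_le => e e0; have L1 : 0 < L + 1 by lra.
near=> h.
have h0 : 0 < h by near: h; exact: nbhs_right_gt.
have hd : h <= d' by near: h; exact: nbhs_right_le.
have yr : `|y (s + h) - p| <= r by rewrite distrC; near: h; move/cvgrPdist_le : yp; apply.
have Sr : `|S h p - p| <= r by rewrite distrC; near: h; move/cvgrPdist_le : Sp; apply.
have qe : `|h^-1 *: (y (s + h) - S h p)| <= e / (L + 1).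
  by near: h; move/cvgr0Pnorm_le : dq; apply; rewrite divr_gt0.
have -> : S (t - s) p = S (t - s - h) (S h p) by rewrite -SD ?subrK //; lra.
rewrite (_ : t - (s + h) = t - s - h); last by rewrite opprD addrA.
have /Lip/(_ _ _ Sr yr) Lh : t - s - d' <= t - s - h <= t - s - d' + d.
  by apply/andP; split; lra.
move: qe; rewrite !normrZ gtr0_norm ?invr_gt0 // => qe.
have hV0 : 0 <= h^-1 by rewrite invr_ge0 ltW.
apply: le_trans (ler_wpM2l hV0 Lh) _; rewrite mulrCA.
apply: le_trans (ler_wpM2l L0 qe) _.
by rewrite mulrCA ger_pMr // ler_pdivrMr // mul1r; lra.
Unshelve. all: by end_near.
Qed.

Lemma sg_orbit_left_cont {y : R -> V} {t s : R} : 0 < s <= t ->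
  y (s - h) @[h --> 0^'+] --> y s ->
  S (t - (s - h)) (y (s - h)) @[h --> 0^'+] --> S (t - s) (y s).
Proof.
move=> /andP[s0 st] ys; have ts0 : 0 <= t - s by lra.
have Sc := convex_continuous hb _ (S_convex _ ts0) (S_bounded _ ts0).
apply: (cvg_trans _ (continuous_cvg _ (Sc (y s)) (sg_cvg_at_right0 ys))).
apply: near_eq_cvg; near=> h; have h0 : 0 <= h by near: h; exact: nbhs_right_ge.
by rewrite /= -SD //; congr S; ring.
Unshelve. all: by end_near.
Qed.

End ConvexSemigroup.

Theorem theorem3p5 (R : realType) (V : completeNormedModType R)
  (le : V -> V -> Prop) (S : R -> V -> V) (y : R -> V) :
  banach_lattice le ->
  order_continuous_norm le ->
  convex_C0_semigroup le S ->
  {within `[0, +oo[, continuous y} ->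
  (forall t : R, 0 <= t -> exists a : V,
      generator_at S (y t) a /\
      (fun h : R => h^-1 *: (y (t + h) - y t)) @ 0^'+ --> a) ->
  forall t : R, 0 <= t -> y t = S t (y 0).
Proof.
move=> hb _ hS hy hgen t t0; have [_ S0 _ _] := hS.
have [y_cont _] := (continuous_within_itvcyP 0 y).1 hy.
have := @eq_right_deriv0 _ _ (fun s => S (t - s) (y s)) t t0.
rewrite subrr subr0 S0; apply.
- move=> s /[dup] /andP[s0 _] st; have [a [ga da]] := hgen s s0.
  exact (sg_orbit_right_deriv0 hb hS st ga da).
- move=> s /[dup] /andP[s0 _] st; apply (sg_orbit_left_cont hb hS st).
  by apply/cvg_sub_at_right0/y_cont; rewrite in_itv /= s0.
Qed.
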